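(* For any positive integers $k$ and $q$ with $q\ge2$, no two distinct points of $D_{q,k}$ are scalar multiples of each other.
   Context: For positive integers $q,k$ with $k\ge2$, let $X_{q,k}=\prod_{j=1}^{k-1}(q^{k+j}+q^{k-j}+1)$ and let $D_{q,k}\subseteq\mathbb{Z}^2$ consist of the points $\frac{X_{q,k}}{q^{k+j}+q^{k-j}+1}\left(q^{k+j}-q^{k-j},\,-q^j-2q^k\right)$ for $j=1,\ldots,k-1$. *)

From mathcomp Require Import all_boot all_order all_algebra.
Set Implicit Arguments. Unset Strict Implicit. Unset Printing Implicit Defensive.
Import Order.TTheory GRing.Theory Num.Theory.
Local Open Scope ring_scope.

Definition denD (q k j : nat) : int :=
  (q ^ (k + j))%N%:Z + (q ^ (k - j))%N%:Z + 1.

Definition Xqk (q k : nat) : int := \prod_(1 <= j < k) denD q k j.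

(* the j-th point of D_{q,k}:
   X/(q^(k+j)+q^(k-j)+1) * (q^(k+j) - q^(k-j), -q^j - 2 q^k) ;
   the division is exact integer division *)
Definition ptD (q k j : nat) : int * int :=
  let c := (Xqk q k %/ denD q k j)%Z in
  (c * ((q ^ (k + j))%N%:Z - (q ^ (k - j))%N%:Z),
   c * (- (q ^ j)%N%:Z - 2 * (q ^ k)%N%:Z)).

Definition inD (q k : nat) (p : int * int) : Prop :=
  exists j : nat, (1 <= j < k)%N /\ p = ptD q k j.

Definition scalar_multiple (u v : int * int) : Prop :=
  exists c : rat, (u.1%:~R : rat) = c * v.1%:~R /\ (u.2%:~R : rat) = c * v.2%:~R.

From mathcomp Require Import all_boot all_order all_algebra.
From mathcomp Require Import ring zify.
Set Implicit Arguments. Unset Strict Implicit. Unset Printing Implicit Defensive.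
Import Order.TTheory GRing.Theory Num.Theory.
Local Open Scope ring_scope.

(* Write Q = q^k and a = q^j, so that q^(k-j) = Q/a.  The j-th point of
   D_{q,k} is a positive multiple of the direction (Q a - Q/a, -(a + 2 Q)),
   and the slope (Q a - Q/a) / (a + 2 Q) is strictly increasing in a > 0.
   Hence the directions of two distinct indices have nonzero cross product,
   whereas a scalar multiple of a vector has zero cross product with it. *)

Definition cross (R : comPzRingType) (u v : R * R) : R := u.1 * v.2 - u.2 * v.1.

Lemma crossC (R : comPzRingType) (u v : R * R) : cross v u = - cross u v.
Proof. by rewrite /cross; ring. Qed.

Lemma cross_scale (R : comPzRingType) (c d : R) (u v : R * R) :
  cross (c * u.1, c * u.2) (d * v.1, d * v.2) = c * d * cross u v.
Proof. by rewrite /cross /=; ring. Qed.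

Lemma scalar_multiple_cross (u v : int * int) :
  scalar_multiple u v -> cross u v = 0.
Proof.
case=> c [e1 e2]; apply/eqP; rewrite -(eqr_int rat) /cross !(intrB, intrM) e1 e2.
by apply/eqP; ring.
Qed.

(* The hypotheses say m = Q/a and m' = Q/b. *)
Lemma slope_lt (R : numDomainType) (a b m m' Q : R) :
  0 < a -> a < b -> 0 < Q -> m * a = Q -> m' * b = Q ->
  (Q * a - m) * (b + 2 * Q) < (Q * b - m') * (a + 2 * Q).
Proof.
move=> a_gt0 ab Q_gt0 ma m'b; have b_gt0 : 0 < b := lt_trans a_gt0 ab.
have expand : a * b * ((Q * b - m') * (a + 2 * Q) - (Q * a - m) * (b + 2 * Q))
  = Q * (b - a) * (2 * Q * a * b + a + b + 2 * Q)
    + a * (a + 2 * Q) * (Q - m' * b) - b * (b + 2 * Q) * (Q - m * a) by ring.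
rewrite ma m'b !subrr !mulr0 subr0 addr0 in expand.
rewrite -subr_gt0 -(pmulr_rgt0 _ (mulr_gt0 a_gt0 b_gt0)) expand.
by rewrite !mulr_gt0 ?subr_gt0 ?addr_gt0 ?mulr_gt0.
Qed.

Definition dirD (q k j : nat) : int * int :=
  ((q ^ (k + j))%N%:Z - (q ^ (k - j))%N%:Z, - (q ^ j)%N%:Z - 2 * (q ^ k)%N%:Z).

Lemma dirD_cross_gt0 (q k j j' : nat) : (1 < q)%N -> (j < j' <= k)%N ->
  0 < cross (dirD q k j) (dirD q k j').
Proof.
move=> q_gt1 /andP[jj' j'k].
have q_gt0 : (0 < q)%N := ltnW q_gt1.
have powK i : (i <= k)%N -> (q ^ (k - i))%N%:Z * (q ^ i)%N%:Z = (q ^ k)%N%:Z.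
  by move=> ik; rewrite -PoszM -expnD subnK.
have -> : cross (dirD q k j) (dirD q k j') =
  ((q ^ k)%N%:Z * (q ^ j')%N%:Z - (q ^ (k - j'))%N%:Z) * ((q ^ j)%N%:Z + 2 * (q ^ k)%N%:Z)
  - ((q ^ k)%N%:Z * (q ^ j)%N%:Z - (q ^ (k - j))%N%:Z) * ((q ^ j')%N%:Z + 2 * (q ^ k)%N%:Z).
  by rewrite /cross /dirD /= !expnD !PoszM; ring.
rewrite subr_gt0; apply: slope_lt; rewrite ?ltz_nat ?expn_gt0 ?ltn_exp2l ?q_gt0 ?powK //; lia.
Qed.

Lemma Xqk_div_denD_gt0 (q k j : nat) : (1 <= j < k)%N -> (0 < Xqk q k %/ denD q k j)%Z.
Proof.
have denD_gt0 i : 0 < denD q k i by rewrite /denD ltr_wpDl // addr_ge0.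
case/andP=> j_ge1 jk; rewrite /Xqk (@big_cat_nat _ _ _ j 1 k _ _ j_ge1 (ltnW jk)) /=.
rewrite [\prod_(j <= i < k) _]big_ltn //.
rewrite mulrCA mulrC mulzK ?gt_eqF //.
by rewrite mulr_gt0 // prodr_gt0.
Qed.

Lemma cross_ptD_neq0 (q k j j' : nat) : (1 < q)%N ->
  (1 <= j < k)%N -> (1 <= j' < k)%N -> j != j' ->
  cross (ptD q k j) (ptD q k j') != 0.
Proof.
move=> q_gt1 hj hj' jj'.
rewrite /ptD (cross_scale _ _ (dirD q k j) (dirD q k j')).
apply: mulf_neq0.
  by apply: mulf_neq0; apply: lt0r_neq0; exact: Xqk_div_denD_gt0.
case: (ltngtP j j') jj' => // [jj'|j'j] _; last rewrite crossC oppr_eq0.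
all: by apply: lt0r_neq0; apply: dirD_cross_gt0 => //; lia.
Qed.

Theorem lemma5 (k q : nat) (hk : (0 < k)%N) (hq : (2 <= q)%N)
  (u v : int * int) :
  inD q k u -> inD q k v -> u <> v -> ~ scalar_multiple u v.
Proof.
move=> [j [hj ->]] [j' [hj' ->]] uv /scalar_multiple_cross/eqP.
apply/negP/cross_ptD_neq0 => //.
by apply: contra_not_neq uv => ->.
Qed.
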